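(* Let $\mathcal{F}$ be the linear operator on $A(D)$ given by \[ \mathcal{F}\Big(\sum_{n\ge0}a_nz^n\Big)=\sum_{n\ge0}a_nz^{2n}+\sum_{k\ge0}a_{3k+2}z^{2k+1}. \] Then $\mathcal{F}\in\mathcal{L}(A(D))$ (continuous for the topology of uniform convergence on compact subsets), $\mathcal{F}$ is injective on $A(D)$ and has closed range in $A(D)$. Furthermore, $\mathcal{F}$ maps $H^2(D)$ into itself, $\mathcal{F}\in\mathcal{L}(H^2(D))$ with $\|\mathcal{F}\|_{\mathcal{L}(H^2(D))}\le\sqrt2$, and $\mathcal{F}$ is expansive in $H^2(D)$: $\|f\|_{H^2(D)}\le\|\mathcal{F}f\|_{H^2(D)}$ for all $f\in H^2(D)$.
   Context: $D$ is the open unit disk, $A(D)$ the space of holomorphic functions on $D$ with the topology of uniform convergence on compact subsets, and $H^2(D)$ the Hardy space with $\|f\|_{H^2(D)}^2=\sup_{0\le r<1}\frac1{2\pi}\int_0^{2\pi}|f(re^{i\phi})|^2d\phi$ (so $\|\sum a_nz^n\|^2=\sum|a_n|^2$). Equivalently, $\mathcal{F}g(z)=g(z^2)+\frac{z^{-1/3}}{3}\big(g(z^{2/3})+e^{2\pi i/3}g(z^{2/3}e^{2\pi i/3})+e^{4\pi i/3}g(z^{2/3}e^{4\pi i/3})\big)$, and $\mathcal{F}(\sum a_nz^n)=\sum a_{T(n)}z^n$ where $T$ is the Collatz map $T(n)=\frac{3n+1}2$ ($n$ odd), $T(n)=\frac n2$ ($n$ even). *)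

From Stdlib Require Import Reals.
From Coquelicot Require Import Coquelicot.

Open Scope R_scope.

(* A holomorphic function on D is represented by its Taylor coefficient
   sequence a : nat -> C; it belongs to A(D) iff its power series converges
   at every point of the open unit disk D. *)
Definition InAD (a : nat -> C) : Prop :=
  forall z : C, Cmod z < 1 -> @ex_pseries C_AbsRing C_NormedModule a z.

Definition eval (a : nat -> C) (z : C) : C :=
  (Series (fun n => Re (Cmult (a n) (@pow_n C_Ring z n))),
   Series (fun n => Im (Cmult (a n) (@pow_n C_Ring z n)))).

(* Convergence in A(D): uniform convergence on compact subsets of D,
   i.e. on every closed disk |z| <= r with 0 <= r < 1. *)
Definition cvg_AD (fs : nat -> nat -> C) (f : nat -> C) : Prop :=
  forall r : R, 0 <= r < 1 -> forall eps : R, 0 < eps ->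
    exists N : nat, forall k : nat, (N <= k)%nat ->
      forall z : C, Cmod z <= r -> Cmod (Cminus (eval (fs k) z) (eval f z)) < eps.

Definition collatzT (n : nat) : nat :=
  if Nat.even n then Nat.div2 n else Nat.div2 (3 * n + 1).

(* F (sum a_n z^n) = sum a_n z^{2n} + sum a_{3k+2} z^{2k+1}
   = sum a_{T(n)} z^n. *)
Definition Fop (a : nat -> C) : nat -> C := fun n => a (collatzT n).

Definition InH2 (a : nat -> C) : Prop :=
  ex_series (fun n => Cmod (a n) ^ 2).

Definition H2norm (a : nat -> C) : R :=
  sqrt (Series (fun n => Cmod (a n) ^ 2)).

(* Coefficientwise, F f = f o T, and T sends 2m to m and 2k+1 to 3k+2.  Hence for nonnegative
   weights c, summing c o T counts every c m once and every c (3k+2) a second time, so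
   sum c <= sum c o T <= 2 sum c: this is the H^2 estimate.  Since T n <= 2n, the weight r^n
   of F f is dominated by s^(T n) whenever r <= s^2 < 1, so F preserves absolute convergence
   on the disk.  Continuity and closedness of the range rest on Cauchy's estimate
   |a_n| rho^n <= sup_{|z| = rho} |f z|, obtained by averaging a partial sum of f over the
   roots of unity: uniform convergence on |z| <= rho forces convergence of every coefficient,
   uniformly against the weights rho^n.  The range of F consists of the g with
   g (2k+1) = g (6k+4), a condition stable under coefficientwise limits, and f is read off
   from F f as m |-> (F f) (2m). *)

From Stdlib Require Import Reals Lra Lia FunctionalExtensionality.
From Coquelicot Require Import Coquelicot.
Open Scope R_scope.

Lemma sum_f_R0_ge0 (u : nat -> R) N : (forall n, 0 <= u n) -> 0 <= sum_f_R0 u N.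
Proof. intros Hu. induction N; simpl; [apply Hu | pose proof (Hu (S N)); lra]. Qed.

Lemma sum_f_R0_mono (u : nat -> R) m n :
  (forall n, 0 <= u n) -> (m <= n)%nat -> sum_f_R0 u m <= sum_f_R0 u n.
Proof. intros Hu. induction 1 as [|n _ IH]; simpl; [lra | pose proof (Hu (S n)); lra]. Qed.

Lemma Series_ge0 (u : nat -> R) : (forall n, 0 <= u n) -> ex_series u -> 0 <= Series u.
Proof.
  intros Hu Hex.
  assert (Hlim : is_lim_seq (sum_n u) (Series u)) by exact (Series_correct u Hex).
  apply (is_lim_seq_le (fun _ => 0) (sum_n u) 0 (Series u)); auto using is_lim_seq_const.
  intro n. rewrite sum_n_Reals. apply sum_f_R0_ge0, Hu.
Qed.

Lemma sum_f_R0_le_Series (u : nat -> R) N :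
  (forall n, 0 <= u n) -> ex_series u -> sum_f_R0 u N <= Series u.
Proof.
  intros Hu Hex. rewrite (Series_incr_n u (S N)) by (auto; lia). simpl pred.
  assert (0 <= Series (fun k => u (S N + k)%nat)).
  { apply Series_ge0; [intro; apply Hu|]. exact (proj1 (ex_series_incr_n u (S N)) Hex). }
  lra.
Qed.

Lemma ex_series_bounded_sums (u : nat -> R) B : (forall n, 0 <= u n) ->
  (forall N, sum_f_R0 u N <= B) -> ex_series u /\ Series u <= B.
Proof.
  intros Hu HB.
  destruct (growing_cv (sum_f_R0 u)) as [l Hl].
  - intro n. simpl. pose proof (Hu (S n)). lra.
  - exists B. intros x [N ->]. apply HB.
  - assert (Hs : is_series u l) by (apply is_series_Reals; exact Hl).
    split; [exists l; exact Hs|].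
    rewrite (is_series_unique u l Hs).
    apply (is_lim_seq_le (sum_f_R0 u) (fun _ => B) l B); auto using is_lim_seq_const.
    apply is_lim_seq_Reals; exact Hl.
Qed.

Lemma ex_series_subseq (u : nat -> R) (phi : nat -> nat) : (forall n, 0 <= u n) ->
  (forall k, (phi k < phi (S k))%nat) -> ex_series u ->
  ex_series (fun k => u (phi k)) /\ Series (fun k => u (phi k)) <= Series u.
Proof.
  intros Hu Hphi Hex. apply ex_series_bounded_sums; [intro; apply Hu|].
  intro N. apply Rle_trans with (sum_f_R0 u (phi N)); [|apply sum_f_R0_le_Series; auto].
  induction N as [|N IH]; simpl.
  - destruct (phi 0%nat) as [|n]; simpl; [lra|].
    pose proof (sum_f_R0_ge0 u n Hu). lra.
  - pose proof (Hphi N) as Hlt. destruct (phi (S N)) as [|m]; [lia|]. simpl.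
    pose proof (sum_f_R0_mono u (phi N) m Hu ltac:(lia)). lra.
Qed.

Lemma sum_f_R0_even_odd (u : nat -> R) K :
  sum_f_R0 u (2 * K + 1) =
  sum_f_R0 (fun m => u (2 * m)%nat) K + sum_f_R0 (fun m => u (2 * m + 1)%nat) K.
Proof.
  induction K as [|K IH]; [simpl; ring|].
  replace (2 * S K + 1)%nat with (S (S (2 * K + 1))) by lia.
  change (sum_f_R0 u (2 * K + 1) + u (S (2 * K + 1)) + u (S (S (2 * K + 1))) =
    sum_f_R0 (fun m => u (2 * m)%nat) K + u (2 * S K)%nat +
    (sum_f_R0 (fun m => u (2 * m + 1)%nat) K + u (2 * S K + 1)%nat)).
  rewrite IH.
  replace (S (2 * K + 1)) with (2 * S K)%nat by lia.
  replace (S (2 * S K)) with (2 * S K + 1)%nat by lia. ring.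
Qed.

Lemma Series_even_odd (u : nat -> R) : (forall n, 0 <= u n) ->
  ex_series (fun m => u (2 * m)%nat) -> ex_series (fun m => u (2 * m + 1)%nat) ->
  ex_series u /\
  Series u = Series (fun m => u (2 * m)%nat) + Series (fun m => u (2 * m + 1)%nat).
Proof.
  intros Hu He Ho.
  set (E := fun m => u (2 * m)%nat). set (O := fun m => u (2 * m + 1)%nat).
  assert (HE : forall n, 0 <= E n) by (intro; apply Hu).
  assert (HO : forall n, 0 <= O n) by (intro; apply Hu).
  destruct (ex_series_bounded_sums u (Series E + Series O) Hu) as [Hex Hle].
  { intro N. apply Rle_trans with (sum_f_R0 u (2 * N + 1)); [apply sum_f_R0_mono; auto; lia|].
    rewrite sum_f_R0_even_odd.
    pose proof (sum_f_R0_le_Series E N HE He). pose proof (sum_f_R0_le_Series O N HO Ho).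
    unfold E, O in *. lra. }
  split; [exact Hex|]. apply Rle_antisym; [exact Hle|].
  apply (is_lim_seq_le (fun K => sum_f_R0 E K + sum_f_R0 O K) (fun _ => Series u)
    (Series E + Series O) (Series u));
    auto using is_lim_seq_const.
  - intro K. unfold E, O. rewrite <- sum_f_R0_even_odd. apply sum_f_R0_le_Series; auto.
  - apply is_lim_seq_plus'; apply is_lim_seq_Reals, is_series_Reals, Series_correct; auto.
Qed.

(** * The Collatz map *)

Lemma collatzT_double m : collatzT (2 * m) = m.
Proof.
  unfold collatzT. rewrite Nat.even_mul. simpl. apply Nat.div2_double.
Qed.

Lemma collatzT_odd k : collatzT (2 * k + 1) = (3 * k + 2)%nat.
Proof.
  unfold collatzT. rewrite Nat.even_add, Nat.even_mul. cbn [Nat.even andb orb negb Bool.eqb].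
  replace (3 * (2 * k + 1) + 1)%nat with (2 * (3 * k + 2))%nat by lia.
  apply Nat.div2_double.
Qed.

Lemma collatzT_le n : (collatzT n <= 2 * n)%nat.
Proof.
  destruct (Nat.Even_or_Odd n) as [[m ->] | [m ->]].
  - rewrite collatzT_double. lia.
  - rewrite collatzT_odd. lia.
Qed.

Lemma Series_collatzT_bounds (c : nat -> R) : (forall n, 0 <= c n) -> ex_series c ->
  ex_series (fun n => c (collatzT n)) /\
  Series c <= Series (fun n => c (collatzT n)) <= 2 * Series c.
Proof.
  intros Hc Hex.
  destruct (ex_series_subseq c (fun k => 3 * k + 2)%nat Hc) as [Hsub Hle];
    [intro; lia | exact Hex |].
  assert (Hsub_ge0 : 0 <= Series (fun k => c (3 * k + 2)%nat)) by (apply Series_ge0; auto).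
  destruct (Series_even_odd (fun n => c (collatzT n))) as [HexT HT].
  - intro; apply Hc.
  - apply (ex_series_ext c); [|exact Hex].
    intro m. cbv beta. rewrite collatzT_double. reflexivity.
  - apply (ex_series_ext (fun k => c (3 * k + 2)%nat)); [|exact Hsub].
    intro k. cbv beta. rewrite collatzT_odd. reflexivity.
  - rewrite (Series_ext (fun m => c (collatzT (2 * m))) c) in HT
      by (intro m; rewrite collatzT_double; reflexivity).
    rewrite (Series_ext (fun k => c (collatzT (2 * k + 1))) (fun k => c (3 * k + 2)%nat)) in HT
      by (intro k; rewrite collatzT_odd; reflexivity).
    split; [exact HexT | lra].
Qed.

Definition Cseries (t : nat -> C) : C :=
  (Series (fun n => Re (t n)), Series (fun n => Im (t n))).

Lemma eval_Cseries (b : nat -> C) (z : C) : eval b z = Cseries (fun n => b n * z ^ n)%C.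
Proof. reflexivity. Qed.

Lemma Cmod_term (b : nat -> C) (z : C) n : Cmod (b n * z ^ n)%C = Cmod (b n) * Cmod z ^ n.
Proof. rewrite Cmod_mult, Cmod_pow. reflexivity. Qed.

Lemma Rabs_Im_le_Cmod (x : C) : Rabs (Im x) <= Cmod x.
Proof. eapply Rle_trans; [apply Rmax_r | apply Rmax_Cmod]. Qed.

Lemma Cmod_le_parts (x : C) (B : R) : Rabs (Re x) <= B -> Rabs (Im x) <= B -> Cmod x <= 2 * B.
Proof.
  intros H1 H2. eapply Rle_trans; [apply Cmod_2Rmax|].
  assert (Hmax : Rmax (Rabs (fst x)) (Rabs (snd x)) <= B) by (apply Rmax_lub; auto).
  assert (0 <= Rmax (Rabs (fst x)) (Rabs (snd x)))
    by (eapply Rle_trans; [apply Rabs_pos | apply Rmax_l]).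
  assert (sqrt 2 < 2) by (rewrite <- (sqrt_square 2) at 2 by lra; apply sqrt_lt_1; lra).
  pose proof (sqrt_pos 2). nra.
Qed.

Lemma ex_series_dominated (t u : nat -> R) :
  (forall n, Rabs (t n) <= u n) -> ex_series u -> ex_series t.
Proof. apply (@ex_series_le R_AbsRing R_CompleteNormedModule). Qed.

Lemma Rabs_Series_le (t u : nat -> R) :
  (forall n, Rabs (t n) <= u n) -> ex_series u -> Rabs (Series t) <= Series u.
Proof.
  intros Htu Hu.
  assert (Habs : ex_series (fun n => Rabs (t n))).
  { apply (ex_series_dominated _ u); auto. intro n. rewrite Rabs_Rabsolu. apply Htu. }
  eapply Rle_trans; [apply Series_Rabs, Habs|].
  apply Series_le; auto. intro n. split; [apply Rabs_pos | apply Htu].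
Qed.

Lemma Cmod_Cseries_le (t : nat -> C) (u : nat -> R) :
  (forall n, Cmod (t n) <= u n) -> ex_series u -> Cmod (Cseries t) <= 2 * Series u.
Proof.
  intros Htu Hu. apply Cmod_le_parts; apply Rabs_Series_le; auto; intro n.
  - eapply Rle_trans; [apply re_le_Cmod | apply Htu].
  - eapply Rle_trans; [apply Rabs_Im_le_Cmod | apply Htu].
Qed.

Lemma ex_series_Re (t : nat -> C) :
  ex_series (fun n => Cmod (t n)) -> ex_series (fun n => Re (t n)).
Proof. apply ex_series_dominated. intro; apply re_le_Cmod. Qed.

Lemma ex_series_Im (t : nat -> C) :
  ex_series (fun n => Cmod (t n)) -> ex_series (fun n => Im (t n)).
Proof. apply ex_series_dominated. intro; apply Rabs_Im_le_Cmod. Qed.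

Lemma Cseries_minus (t s : nat -> C) :
  ex_series (fun n => Cmod (t n)) -> ex_series (fun n => Cmod (s n)) ->
  Cseries (fun n => t n - s n)%C = (Cseries t - Cseries s)%C.
Proof.
  intros Ht Hs. unfold Cseries. apply injective_projections.
  - change (Series (fun n => Re (t n - s n)%C) =
            Series (fun n => Re (t n)) - Series (fun n => Re (s n))).
    rewrite <- Series_minus by auto using ex_series_Re. reflexivity.
  - change (Series (fun n => Im (t n - s n)%C) =
            Series (fun n => Im (t n)) - Series (fun n => Im (s n))).
    rewrite <- Series_minus by auto using ex_series_Im. reflexivity.
Qed.

Lemma Re_sum_n (t : nat -> C) N : Re (sum_n t N) = sum_f_R0 (fun n => Re (t n)) N.
Proof.
  induction N as [|N IH]; [rewrite sum_O; reflexivity|].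
  rewrite sum_Sn. simpl. rewrite <- IH. reflexivity.
Qed.

Lemma Im_sum_n (t : nat -> C) N : Im (sum_n t N) = sum_f_R0 (fun n => Im (t n)) N.
Proof.
  induction N as [|N IH]; [rewrite sum_O; reflexivity|].
  rewrite sum_Sn. simpl. rewrite <- IH. reflexivity.
Qed.

Lemma Cseries_incr_n (t : nat -> C) N : ex_series (fun n => Cmod (t n)) ->
  Cseries t = (sum_n t N + Cseries (fun k => t (S N + k)%nat))%C.
Proof.
  intros Ht. unfold Cseries. apply injective_projections.
  - change (Series (fun n => Re (t n)) =
            Re (sum_n t N) + Series (fun k => Re (t (S N + k)%nat))).
    rewrite Re_sum_n.
    apply (Series_incr_n (fun n => Re (t n)) (S N)); [lia | apply ex_series_Re, Ht].
  - change (Series (fun n => Im (t n)) =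
            Im (sum_n t N) + Series (fun k => Im (t (S N + k)%nat))).
    rewrite Im_sum_n.
    apply (Series_incr_n (fun n => Im (t n)) (S N)); [lia | apply ex_series_Im, Ht].
Qed.

Lemma Cmod_Cseries_tail (t : nat -> C) N : ex_series (fun n => Cmod (t n)) ->
  Cmod (Cseries t - sum_n t N)%C <= 2 * Series (fun k => Cmod (t (S N + k)%nat)).
Proof.
  intros Ht. rewrite (Cseries_incr_n t N Ht).
  replace (sum_n t N + Cseries (fun k => t (S N + k)%nat) - sum_n t N)%C
    with (Cseries (fun k => t (S N + k)%nat)) by ring.
  apply Cmod_Cseries_le; [intro; apply Rle_refl|].
  exact (proj1 (ex_series_incr_n (fun n => Cmod (t n)) (S N)) Ht).
Qed.

(** * Power series on the unit disk *)

Lemma pow_le_pow_le_1 (s : R) m n : 0 <= s <= 1 -> (m <= n)%nat -> s ^ n <= s ^ m.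
Proof.
  intros Hs. induction 1 as [|n _ IH]; [lra|].
  simpl. pose proof (pow_le s n (proj1 Hs)). nra.
Qed.

(* At radius (1+r)/2 the terms are eventually at most 1, so at radius r they are dominated
   by a geometric series. *)
Lemma InAD_abs_summable (b : nat -> C) (r : R) : InAD b -> 0 <= r < 1 ->
  ex_series (fun n => Cmod (b n) * r ^ n).
Proof.
  intros Hb Hr.
  set (r' := (1 + r) / 2). set (q := r / r').
  assert (Hr' : 0 < r' < 1) by (unfold r'; lra).
  assert (Hrq : r = r' * q) by (unfold q; field; lra).
  assert (Hq : 0 <= q < 1) by (split; [|unfold r' in *]; nra).
  assert (Hex : ex_pseries b (RtoC r')) by (apply Hb; rewrite Cmod_R, Rabs_pos_eq; lra).
  destruct (Cauchy_ex_series _ Hex (mkposreal 1 Rlt_0_1)) as [N HN].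
  assert (Hbound : forall n, (N <= n)%nat -> Cmod (b n) * r' ^ n <= 1).
  { intros n Hn. specialize (HN n n Hn Hn). rewrite sum_n_n in HN.
    change (Cmod (RtoC r' ^ n * b n)%C < 1) in HN.
    rewrite Cmod_mult, Cmod_pow, Cmod_R, Rabs_pos_eq in HN by lra. lra. }
  apply (ex_series_incr_n _ N).
  apply (ex_series_dominated _ (fun k => q ^ (N + k))).
  - intro k. rewrite Rabs_pos_eq by (apply Rmult_le_pos; [apply Cmod_ge_0 | apply pow_le; lra]).
    rewrite Hrq, Rpow_mult_distr, <- Rmult_assoc.
    pose proof (pow_le q (N + k) (proj1 Hq)).
    pose proof (Hbound (N + k)%nat ltac:(lia)). nra.
  - apply (ex_series_incr_n (fun n => q ^ n) N), ex_series_geom. rewrite Rabs_pos_eq; lra.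
Qed.

Lemma InAD_of_abs_summable (b : nat -> C) :
  (forall r, 0 <= r < 1 -> ex_series (fun n => Cmod (b n) * r ^ n)) -> InAD b.
Proof.
  intros Hb z Hz.
  apply (@ex_series_le C_AbsRing C_CompleteNormedModule _ (fun n => Cmod (b n) * Cmod z ^ n)).
  - intro n. change (Cmod (z ^ n * b n)%C <= Cmod (b n) * Cmod z ^ n).
    rewrite Cmod_mult, Cmod_pow. lra.
  - apply Hb. split; [apply Cmod_ge_0 | exact Hz].
Qed.

Lemma eval_abs_summable (b : nat -> C) (z : C) : InAD b -> Cmod z < 1 ->
  ex_series (fun n => Cmod (b n * z ^ n)%C).
Proof.
  intros Hb Hz. apply (ex_series_ext (fun n => Cmod (b n) * Cmod z ^ n)).
  - intro n. symmetry. apply Cmod_term.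
  - apply InAD_abs_summable; [exact Hb | split; [apply Cmod_ge_0 | exact Hz]].
Qed.

Lemma InAD_minus (a b : nat -> C) : InAD a -> InAD b -> InAD (fun n => a n - b n)%C.
Proof.
  intros Ha Hb. apply InAD_of_abs_summable. intros r Hr.
  apply (ex_series_dominated _ (fun n => Cmod (a n) * r ^ n + Cmod (b n) * r ^ n)).
  - intro n. pose proof (pow_le r n (proj1 Hr)).
    rewrite Rabs_pos_eq by (apply Rmult_le_pos; [apply Cmod_ge_0 | exact H]).
    rewrite <- Rmult_plus_distr_r. apply Rmult_le_compat_r; [exact H|].
    unfold Cminus. eapply Rle_trans; [apply Cmod_triangle | rewrite Cmod_opp; lra].
  - apply (@ex_series_plus R_AbsRing R_NormedModule); apply InAD_abs_summable; auto.
Qed.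

Lemma eval_minus (a b : nat -> C) (z : C) : InAD a -> InAD b -> Cmod z < 1 ->
  eval (fun n => a n - b n)%C z = (eval a z - eval b z)%C.
Proof.
  intros Ha Hb Hz. rewrite !eval_Cseries, <- Cseries_minus by auto using eval_abs_summable.
  f_equal. apply functional_extensionality. intro n. ring.
Qed.

(** * Roots of unity and Cauchy's estimate *)

Definition cis (theta : R) : C := (cos theta, sin theta).

Lemma cis_pow (theta : R) n : (cis theta ^ n)%C = cis (INR n * theta).
Proof.
  induction n as [|n IH].
  - unfold cis. rewrite Rmult_0_l, cos_0, sin_0. reflexivity.
  - rewrite Cpow_S, IH, S_INR. unfold cis, Cmult. simpl.
    replace ((INR n + 1) * theta) with (theta + INR n * theta) by ring.
    rewrite cos_plus, sin_plus. f_equal; ring.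
Qed.

Lemma Cmod_cis (theta : R) : Cmod (cis theta) = 1.
Proof.
  unfold Cmod, cis. simpl. rewrite <- sqrt_1 at 3. f_equal.
  pose proof (sin2_cos2 theta). unfold Rsqr in *. lra.
Qed.

Lemma cis_neq_1 (theta : R) : 0 < theta < 2 * PI -> cis theta <> 1%C.
Proof.
  intros [H0 H2] E. injection E as Hcos Hsin.
  destruct (Rtotal_order theta PI) as [Hlt | [-> | Hgt]].
  - pose proof (sin_gt_0 theta H0 Hlt). lra.
  - rewrite cos_PI in Hcos. lra.
  - pose proof (sin_lt_0 theta Hgt H2). lra.
Qed.

Lemma sum_Sn_C (a : nat -> C) N : sum_n a (S N) = (sum_n a N + a (S N))%C :> C.
Proof. exact (@sum_Sn C_AbelianMonoid a N). Qed.

Lemma sum_n_mult_l_C (c : C) (a : nat -> C) N :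
  sum_n (fun k => c * a k)%C N = (c * sum_n a N)%C.
Proof. exact (@sum_n_mult_l C_Ring c a N). Qed.

Lemma sum_n_geom_C (v : C) N : ((1 - v) * sum_n (fun j => v ^ j) N = 1 - v ^ S N)%C.
Proof.
  induction N as [|N IH].
  - rewrite sum_O. cbn [Cpow]. ring.
  - rewrite sum_Sn_C, Cmult_plus_distr_l, IH, !Cpow_S. ring.
Qed.

Lemma sum_n_const_C (c : C) N : sum_n (fun _ => c) N = (INR (S N) * c)%C :> C.
Proof.
  induction N as [|N IH].
  - rewrite sum_O. simpl INR. ring.
  - rewrite sum_Sn_C, IH, (S_INR (S N)), RtoC_plus. ring.
Qed.

Lemma sum_n_single_C (f : nat -> C) n N : (n <= N)%nat ->
  (forall m, (m <= N)%nat -> m <> n -> f m = 0%C) -> sum_n f N = f n :> C.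
Proof.
  intros Hn Hf. induction N as [|N IH].
  - replace n with 0%nat by lia. apply sum_O.
  - rewrite sum_Sn_C.
    destruct (Nat.eq_dec n (S N)) as [-> | Hne].
    + rewrite (sum_n_ext_loc f (fun _ => RtoC 0) N) by (intros m Hm; apply Hf; lia).
      rewrite sum_n_const_C. ring.
    + rewrite IH by (lia || (intros; apply Hf; lia)). rewrite (Hf (S N)) by lia. ring.
Qed.

Section RootOfUnity.

Variables (N : nat) (w : C).
Hypothesis w_root : (w ^ S N = 1)%C.
Hypothesis w_primitive : forall d, (0 < d < S N)%nat -> (w ^ d <> 1)%C.

Lemma sum_root_pow d : (d mod S N <> 0)%nat -> sum_n (fun j => (w ^ d) ^ j)%C N = 0 :> C.
Proof.
  intros Hd.
  assert (Hmod : (w ^ d = w ^ (d mod S N))%C).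
  { rewrite (Nat.div_mod_eq d (S N)) at 1.
    rewrite Cpow_add_r, Cpow_mult_r, w_root, Cpow_1_l. ring. }
  assert (Hv1 : (1 - w ^ d)%C <> 0%C).
  { rewrite Hmod. intro E. apply (w_primitive (d mod S N)).
    - pose proof (Nat.mod_upper_bound d (S N)). lia.
    - replace (w ^ (d mod S N))%C with (1 - (1 - w ^ (d mod S N)))%C by ring.
      rewrite E. ring. }
  assert (HvN : ((w ^ d) ^ S N = 1)%C).
  { rewrite <- Cpow_mult_r, Nat.mul_comm, Cpow_mult_r, w_root. apply Cpow_1_l. }
  pose proof (sum_n_geom_C (w ^ d) N) as G. rewrite HvN in G.
  set (sum := sum_n (fun j => (w ^ d) ^ j)%C N) in *.
  replace sum with ((1 - w ^ d) * sum / (1 - w ^ d))%C by (field; exact Hv1).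
  rewrite G. field. exact Hv1.
Qed.

Definition partial_sum (b : nat -> C) (z : C) : C := sum_n (fun m => b m * z ^ m)%C N.

(* The factor (w^j)^(S N - n) shifts the exponent m to m + S N - n, a multiple of S N only
   for m = n; all other frequencies average out to 0. *)
Lemma root_filter (b : nat -> C) (rho : R) n : (n <= N)%nat ->
  sum_n (fun j => (w ^ j) ^ (S N - n) * partial_sum b (rho * w ^ j))%C N =
  (INR (S N) * (b n * rho ^ n))%C :> C.
Proof.
  intros Hn. unfold partial_sum.
  assert (Hterm : forall j m, ((w ^ j) ^ (S N - n) * (b m * (rho * w ^ j) ^ m) =
                               b m * rho ^ m * (w ^ (m + S N - n)) ^ j)%C).
  { intros j m. rewrite Cpow_mult_l, <- !Cpow_mult_r.
    replace ((m + S N - n) * j)%nat with (j * (S N - n) + j * m)%nat by nia.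
    rewrite Cpow_add_r. ring. }
  rewrite (sum_n_ext _ (fun j => sum_n (fun m => b m * rho ^ m * (w ^ (m + S N - n)) ^ j) N)%C).
  2: { intro j. rewrite <- sum_n_mult_l_C. apply sum_n_ext. intro m. apply Hterm. }
  rewrite sum_n_switch.
  rewrite (sum_n_single_C _ n N Hn).
  - replace (n + S N - n)%nat with (S N) by lia. rewrite w_root.
    rewrite (sum_n_ext _ (fun _ => b n * rho ^ n)%C)
      by (intro; rewrite Cpow_1_l, Cmult_1_r; reflexivity).
    rewrite sum_n_const_C. reflexivity.
  - intros m Hm Hmn.
    rewrite sum_n_mult_l_C, sum_root_pow; [ring|].
    rewrite Nat.Div0.mod_divides. intros [[|[|c]] Hc]; lia.
Qed.

End RootOfUnity.

Definition root_of_unity (N : nat) : C := cis (2 * PI / INR (S N)).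

Lemma root_of_unity_pow N : (root_of_unity N ^ S N)%C = 1.
Proof.
  unfold root_of_unity. rewrite cis_pow.
  replace (INR (S N) * (2 * PI / INR (S N))) with (2 * PI) by (field; apply not_0_INR; lia).
  unfold cis. rewrite cos_2PI, sin_2PI. reflexivity.
Qed.

Lemma root_of_unity_primitive N d : (0 < d < S N)%nat -> (root_of_unity N ^ d)%C <> 1.
Proof.
  intros Hd. unfold root_of_unity. rewrite cis_pow. apply cis_neq_1.
  assert (HN : 0 < INR (S N)) by (apply lt_0_INR; lia).
  assert (0 < INR d) by (apply lt_0_INR; lia).
  assert (INR d < INR (S N)) by (apply lt_INR; lia).
  pose proof PI_RGT_0.
  replace (INR d * (2 * PI / INR (S N))) with (2 * PI * (INR d / INR (S N))) by (field; lra).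
  assert (0 < INR d / INR (S N) < 1).
  { split; [apply Rdiv_lt_0_compat; lra|]. apply (Rmult_lt_reg_r (INR (S N))); [lra|].
    unfold Rdiv. rewrite Rmult_assoc, Rinv_l; lra. }
  nra.
Qed.

Lemma Cmod_sum_n_le (a : nat -> C) (B : R) N :
  (forall j, Cmod (a j) <= B) -> Cmod (sum_n a N) <= INR (S N) * B.
Proof.
  intros Ha.
  eapply Rle_trans; [exact (@norm_sum_n_m C_AbsRing C_NormedModule a 0 N)|].
  replace (INR (S N) * B) with (INR (S N - 0) * B) by (rewrite Nat.sub_0_r; reflexivity).
  rewrite <- sum_n_m_const. apply sum_n_m_le. intro k. apply Ha.
Qed.

Lemma Cmod_le_add_dist (x y : C) : Cmod x <= Cmod y + Cmod (y - x)%C.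
Proof.
  replace x with (y + - (y - x))%C at 1 by ring.
  eapply Rle_trans; [apply Cmod_triangle | rewrite Cmod_opp; lra].
Qed.

Lemma coef_le_sup_add_tail (b : nat -> C) (rho M : R) N n : 0 < rho ->
  ex_series (fun k => Cmod (b k) * rho ^ k) ->
  (forall z, Cmod z = rho -> Cmod (eval b z) <= M) -> (n <= N)%nat ->
  Cmod (b n) * rho ^ n <= M + 2 * Series (fun k => Cmod (b (S N + k)%nat) * rho ^ (S N + k)).
Proof.
  intros Hrho Hb HM Hn.
  set (w := root_of_unity N).
  set (tail := Series (fun k => Cmod (b (S N + k)%nat) * rho ^ (S N + k))).
  assert (Hw : forall j, Cmod (w ^ j)%C = 1).
  { intro j. rewrite Cmod_pow. unfold w, root_of_unity. rewrite Cmod_cis. apply pow1. }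
  assert (Hpartial : forall j, Cmod (partial_sum N b (rho * w ^ j)%C) <= M + 2 * tail).
  { intro j. set (z := (rho * w ^ j)%C).
    assert (Hz : Cmod z = rho) by (unfold z; rewrite Cmod_mult, Hw, Cmod_R, Rabs_pos_eq; lra).
    set (t := fun m => (b m * z ^ m)%C).
    assert (Ht : forall m, Cmod (t m) = Cmod (b m) * rho ^ m)
      by (intro; unfold t; rewrite Cmod_term, Hz; reflexivity).
    assert (Htail := Cmod_Cseries_tail t N (ex_series_ext _ _ (fun m => eq_sym (Ht m)) Hb)).
    rewrite (Series_ext _ _ (fun k => Ht (S N + k)%nat)) in Htail. fold tail in Htail.
    change (Cseries t) with (eval b z) in Htail.
    eapply Rle_trans; [apply (Cmod_le_add_dist _ (eval b z))|].
    specialize (HM z Hz). change (partial_sum N b z) with (sum_n t N). lra. }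
  assert (Hsum := Cmod_sum_n_le (fun j => (w ^ j) ^ (S N - n) * partial_sum N b (rho * w ^ j))%C
                    (M + 2 * tail) N).
  rewrite root_filter in Hsum;
    [| apply root_of_unity_pow | apply root_of_unity_primitive | exact Hn].
  rewrite !Cmod_mult, Cmod_pow, !Cmod_R, Rabs_pos_eq, Rabs_pos_eq in Hsum by (lra || apply pos_INR).
  assert (HN : 0 < INR (S N)) by (apply lt_0_INR; lia).
  apply (Rmult_le_reg_l (INR (S N))); [exact HN|]. apply Hsum.
  intro j. rewrite Cmod_mult, Cmod_pow, Hw, pow1, Rmult_1_l. apply Hpartial.
Qed.

Lemma is_lim_seq_Series_tail (u : nat -> R) : ex_series u ->
  is_lim_seq (fun N => Series (fun k => u (S N + k)%nat)) 0.
Proof.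
  intros Hu.
  apply (is_lim_seq_ext (fun N => Series u - sum_f_R0 u N)).
  - intro N. rewrite (Series_incr_n u (S N)) by (auto; lia). simpl pred. ring.
  - replace 0 with (Series u - Series u) by ring.
    apply is_lim_seq_minus'; [apply is_lim_seq_const|].
    apply (is_lim_seq_ext (sum_n u)); [intro; apply sum_n_Reals|].
    exact (Series_correct u Hu).
Qed.

Lemma Cauchy_estimate (b : nat -> C) (rho M : R) : 0 < rho ->
  ex_series (fun k => Cmod (b k) * rho ^ k) ->
  (forall z, Cmod z = rho -> Cmod (eval b z) <= M) ->
  forall n, Cmod (b n) * rho ^ n <= M.
Proof.
  intros Hrho Hb HM n.
  assert (Hle : Rbar_le (Cmod (b n) * rho ^ n) (M + 2 * 0)).
  { apply (is_lim_seq_le_loc (fun _ => Cmod (b n) * rho ^ n)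
             (fun N => M + 2 * Series (fun k => Cmod (b (S N + k)%nat) * rho ^ (S N + k)))).
    - exists n. intros N HN. apply coef_le_sup_add_tail; auto.
    - apply is_lim_seq_const.
    - apply is_lim_seq_plus'; [apply is_lim_seq_const|].
      apply is_lim_seq_mult'; [apply is_lim_seq_const|].
      exact (is_lim_seq_Series_tail _ Hb). }
  simpl in Hle. lra.
Qed.

(** * The operator F *)

Lemma pow_le_pow_collatzT (r s : R) n : 0 <= r <= s * s -> 0 <= s <= 1 ->
  r ^ n <= s ^ collatzT n.
Proof.
  intros Hr Hs. apply Rle_trans with (s ^ (2 * n)).
  - rewrite pow_mult. apply pow_incr. simpl. lra.
  - apply pow_le_pow_le_1; [exact Hs | apply collatzT_le].
Qed.

Lemma Fop_InAD (f : nat -> C) : InAD f -> InAD (Fop f).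
Proof.
  intros Hf. apply InAD_of_abs_summable. intros r Hr.
  set (s := (1 + r) / 2).
  assert (Hs : 0 <= s < 1) by (unfold s; lra).
  assert (Hrs : 0 <= r <= s * s) by (unfold s; nra).
  set (c := fun m => Cmod (f m) * s ^ m).
  assert (Hc : forall m, 0 <= c m)
    by (intro; apply Rmult_le_pos; [apply Cmod_ge_0 | apply pow_le; lra]).
  destruct (Series_collatzT_bounds c Hc (InAD_abs_summable f s Hf Hs)) as [HcT _].
  apply (ex_series_dominated _ (fun n => c (collatzT n))); [intro n | exact HcT].
  unfold c, Fop. rewrite Rabs_pos_eq by (apply Rmult_le_pos; [apply Cmod_ge_0 | apply pow_le; lra]).
  apply Rmult_le_compat_l; [apply Cmod_ge_0 | apply pow_le_pow_collatzT; lra].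
Qed.

Lemma Cmod_eval_Fop_le (b : nat -> C) (rho M r : R) (z : C) :
  0 <= rho <= 1 -> 0 <= r < rho * rho -> Cmod z <= r ->
  (forall n, Cmod (b n) * rho ^ n <= M) ->
  Cmod (eval (Fop b) z) <= 2 * M / (1 - r / (rho * rho)).
Proof.
  intros Hrho Hr Hz HM.
  set (q := r / (rho * rho)).
  assert (Hrq : r = q * (rho * rho)) by (unfold q; field; nra).
  assert (Hq : 0 <= q < 1) by (split; nra).
  rewrite eval_Cseries.
  replace (2 * M / (1 - q)) with (2 * Series (fun n => M * q ^ n))
    by (rewrite Series_scal_l, Series_geom by (rewrite Rabs_pos_eq; lra); field; lra).
  apply Cmod_Cseries_le.
  - intro n. rewrite Cmod_term. unfold Fop.
    assert (Hzn : Cmod z ^ n <= q ^ n * rho ^ collatzT n).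
    { apply Rle_trans with (r ^ n); [apply pow_incr; split; [apply Cmod_ge_0 | exact Hz]|].
      rewrite Hrq, Rpow_mult_distr. apply Rmult_le_compat_l; [apply pow_le; lra|].
      apply pow_le_pow_collatzT; nra. }
    pose proof (HM (collatzT n)). pose proof (Cmod_ge_0 (b (collatzT n))).
    pose proof (pow_le q n (proj1 Hq)).
    apply Rle_trans with (Cmod (b (collatzT n)) * (q ^ n * rho ^ collatzT n));
      [apply Rmult_le_compat_l; auto | nra].
  - apply (@ex_series_scal_l R_AbsRing R_NormedModule), ex_series_geom.
    rewrite Rabs_pos_eq; lra.
Qed.

Lemma cvg_AD_coef_uniform (fs : nat -> nat -> C) (f : nat -> C) :
  (forall k, InAD (fs k)) -> InAD f -> cvg_AD fs f ->
  forall rho, 0 < rho < 1 -> forall M, 0 < M ->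
  exists N, forall k, (N <= k)%nat -> forall n, Cmod (fs k n - f n)%C * rho ^ n <= M.
Proof.
  intros Hfs Hf Hc rho Hrho M HM.
  destruct (Hc rho ltac:(lra) M HM) as [N HN].
  exists N. intros k Hk. apply Cauchy_estimate; [lra | |].
  - apply InAD_abs_summable; [apply InAD_minus; auto | lra].
  - intros z Hz. rewrite eval_minus by (auto; lra). left. apply HN; [exact Hk | lra].
Qed.

Lemma Fop_continuous (fs : nat -> nat -> C) (f : nat -> C) :
  (forall k, InAD (fs k)) -> InAD f -> cvg_AD fs f ->
  cvg_AD (fun k => Fop (fs k)) (Fop f).
Proof.
  intros Hfs Hf Hc r Hr eps Heps.
  set (rho := (1 + r) / 2).
  assert (Hrho : 0 < rho < 1) by (unfold rho; lra).
  assert (Hr2 : r < rho * rho) by (unfold rho; nra).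
  set (q := r / (rho * rho)).
  assert (Hq : q < 1).
  { unfold q. apply (Rmult_lt_reg_r (rho * rho)); [nra|]. unfold Rdiv.
    rewrite Rmult_assoc, Rinv_l; nra. }
  destruct (cvg_AD_coef_uniform fs f Hfs Hf Hc rho Hrho (eps * (1 - q) / 4)) as [N HN].
  { apply Rdiv_lt_0_compat; [apply Rmult_lt_0_compat|]; lra. }
  exists N. intros k Hk z Hz.
  rewrite <- eval_minus by (auto using Fop_InAD; lra).
  eapply Rle_lt_trans.
  - apply (Cmod_eval_Fop_le (fun n => fs k n - f n)%C rho (eps * (1 - q) / 4) r);
      [lra | lra | exact Hz | apply HN, Hk].
  - fold q. replace (2 * (eps * (1 - q) / 4) / (1 - q)) with (eps / 2) by (field; lra). lra.
Qed.

Lemma cvg_AD_coef (fs : nat -> nat -> C) (f : nat -> C) :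
  (forall k, InAD (fs k)) -> InAD f -> cvg_AD fs f ->
  forall n eps, 0 < eps -> exists N, forall k, (N <= k)%nat -> Cmod (fs k n - f n)%C <= eps.
Proof.
  intros Hfs Hf Hc n eps Heps.
  assert (Hp : 0 < (1 / 2) ^ n) by (apply pow_lt; lra).
  destruct (cvg_AD_coef_uniform fs f Hfs Hf Hc (1 / 2) ltac:(lra) (eps * (1 / 2) ^ n))
    as [N HN]; [nra|].
  exists N. intros k Hk. apply (Rmult_le_reg_r ((1 / 2) ^ n)); [exact Hp | apply HN, Hk].
Qed.

Lemma Ceq_of_common_approx (x y : C) :
  (forall eps, 0 < eps -> exists w, Cmod (w - x)%C <= eps /\ Cmod (w - y)%C <= eps) -> x = y.
Proof.
  intros Happrox.
  assert (Hxy : Cmod (x - y)%C = 0).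
  { apply Rle_antisym; [|apply Cmod_ge_0]. apply Rnot_lt_le. intro Hpos.
    destruct (Happrox (Cmod (x - y)%C / 4) ltac:(lra)) as [w [Hx Hy]].
    assert (Cmod (x - y)%C <= Cmod (w - x)%C + Cmod (w - y)%C).
    { replace (x - y)%C with ((w - y) + - (w - x))%C by ring.
      eapply Rle_trans; [apply Cmod_triangle | rewrite Cmod_opp; lra]. }
    lra. }
  apply Cmod_eq_0 in Hxy. replace x with ((x - y) + y)%C by ring. rewrite Hxy. ring.
Qed.

Lemma Fop_even_part (g : nat -> C) :
  (forall k, g (2 * k + 1)%nat = g (6 * k + 4)%nat) -> g = Fop (fun m => g (2 * m)%nat).
Proof.
  intros Hg. apply functional_extensionality. intro n. unfold Fop.
  destruct (Nat.Even_or_Odd n) as [[m ->] | [k ->]].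
  - rewrite collatzT_double. reflexivity.
  - rewrite collatzT_odd, Hg. f_equal. lia.
Qed.

Lemma InAD_even_part (g : nat -> C) : InAD g -> InAD (fun m => g (2 * m)%nat).
Proof.
  intros Hg. apply InAD_of_abs_summable. intros r Hr.
  set (s := (1 + r) / 2).
  assert (Hs : 0 <= s < 1) by (unfold s; lra).
  set (c := fun n => Cmod (g n) * s ^ n).
  assert (Hc : forall n, 0 <= c n)
    by (intro; apply Rmult_le_pos; [apply Cmod_ge_0 | apply pow_le; lra]).
  destruct (ex_series_subseq c (fun m => 2 * m)%nat Hc) as [Hsub _];
    [intro; lia | apply InAD_abs_summable; auto |].
  apply (ex_series_dominated _ (fun m => c (2 * m)%nat)); [intro m | exact Hsub].
  unfold c. rewrite Rabs_pos_eq by (apply Rmult_le_pos; [apply Cmod_ge_0 | apply pow_le; lra]).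
  apply Rmult_le_compat_l; [apply Cmod_ge_0|].
  rewrite pow_mult. apply pow_incr. unfold s in *. nra.
Qed.

Lemma Fop_closed_range (fs : nat -> nat -> C) (g : nat -> C) :
  (forall k, InAD (fs k)) -> InAD g -> cvg_AD (fun k => Fop (fs k)) g ->
  exists f, InAD f /\ g = Fop f.
Proof.
  intros Hfs Hg Hc.
  assert (Hcoef := cvg_AD_coef _ g (fun k => Fop_InAD _ (Hfs k)) Hg Hc).
  exists (fun m => g (2 * m)%nat). split; [apply InAD_even_part, Hg|].
  apply Fop_even_part. intro k. apply Ceq_of_common_approx. intros eps Heps.
  destruct (Hcoef (2 * k + 1)%nat eps Heps) as [N1 H1].
  destruct (Hcoef (6 * k + 4)%nat eps Heps) as [N2 H2].
  exists (Fop (fs (N1 + N2)%nat) (2 * k + 1)%nat). split; [apply H1; lia|].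
  replace (Fop (fs (N1 + N2)%nat) (2 * k + 1)%nat) with (Fop (fs (N1 + N2)%nat) (6 * k + 4)%nat).
  - apply H2; lia.
  - unfold Fop. rewrite collatzT_odd. replace (6 * k + 4)%nat with (2 * (3 * k + 2))%nat by lia.
    rewrite collatzT_double. reflexivity.
Qed.

Lemma Fop_injective (f g : nat -> C) : Fop f = Fop g -> f = g.
Proof.
  intros E. apply functional_extensionality. intro m.
  pose proof (f_equal (fun h => h (2 * m)%nat) E) as Em. unfold Fop in Em.
  rewrite collatzT_double in Em. exact Em.
Qed.

Lemma Fop_H2 (f : nat -> C) : InH2 f ->
  InH2 (Fop f) /\ H2norm (Fop f) <= sqrt 2 * H2norm f /\ H2norm f <= H2norm (Fop f).
Proof.
  intros Hf. unfold InH2, H2norm in *.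
  set (c := fun n => Cmod (f n) ^ 2).
  destruct (Series_collatzT_bounds c (fun n => pow2_ge_0 _) Hf) as [HcT [Hlow Hup]].
  assert (0 <= Series c) by (apply Series_ge0; [intro; apply pow2_ge_0 | exact Hf]).
  split; [exact HcT|]. split.
  - rewrite <- sqrt_mult by lra. apply sqrt_le_1_alt, Hup.
  - apply sqrt_le_1_alt, Hlow.
Qed.

Theorem mainTheorem6 :
  (* F maps A(D) into A(D) *)
  (forall f : nat -> C, InAD f -> InAD (Fop f)) /\
  (* F is continuous on A(D) (A(D) is metrizable: sequential continuity) *)
  (forall (fs : nat -> nat -> C) (f : nat -> C),
      (forall k, InAD (fs k)) -> InAD f -> cvg_AD fs f ->
      cvg_AD (fun k => Fop (fs k)) (Fop f)) /\
  (* F is injective on A(D) *)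
  (forall f g : nat -> C, InAD f -> InAD g -> Fop f = Fop g -> f = g) /\
  (* F has closed range in A(D) (sequential closedness) *)
  (forall (fs : nat -> nat -> C) (g : nat -> C),
      (forall k, InAD (fs k)) -> InAD g -> cvg_AD (fun k => Fop (fs k)) g ->
      exists f : nat -> C, InAD f /\ g = Fop f) /\
  (* F maps H^2 into H^2, with norm <= sqrt 2, and is expansive *)
  (forall f : nat -> C, InH2 f ->
      InH2 (Fop f) /\
      H2norm (Fop f) <= sqrt 2 * H2norm f /\
      H2norm f <= H2norm (Fop f)).
Proof.
  split; [exact Fop_InAD|].
  split; [exact Fop_continuous|].
  split; [intros f g _ _; exact (Fop_injective f g)|].
  split; [exact Fop_closed_range|].
  exact Fop_H2.
Qed.
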